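(* In the stochastic epidemic model described in the context, for every $k\ge1$, $$I(k)=\Phi_I(k,0)I_0-\sum_{i=0}^{k-1}\Phi_I(k,i+1)\,v(i)\,u(i),$$ and the expected infected cases satisfy $$\mathbb{E}[I(k)]\le (1+\overline{\delta}-\overline{d_I})^{k}I_0-v_{\min}\sum_{i=0}^{k-1}(1+\overline{\delta}-\overline{d_I})^{k-i-1}\,\mathbb{E}[u(i)].$$
   Context: Time is indexed by days $k=0,1,2,\dots$. Let $(\delta(k))_{k\ge0}$, $(d_I(k))_{k\ge0}$, $(v(k))_{k\ge0}$ be three mutually independent sequences of random variables, each sequence i.i.d. in $k$, with $0\le \delta(k)\le \delta_{\max}$, $0\le d_I(k)\le d_{\max}$ where $d_{\max}<1$, and $0<v_{\min}\le v(k)\le v_{\max}\le 1$. Write $\overline{\delta}=\mathbb{E}[\delta(k)]$, $\overline{d_I}=\mathbb{E}[d_I(k)]$. The control $u(k)\ge0$ is causal: $u(k)$ is a function only of the information (states) available up to day $k$. The cases evolve by $S(k+1)=S(k)-\delta(k)I(k)$, $I(k+1)=(1+\delta(k))I(k)-v(k)u(k)-d_I(k)I(k)$, $R(k+1)=R(k)+v(k)u(k)$, $D(k+1)=D(k)+d_I(k)I(k)$, with $S(0)=S_0$, $I(0)=I_0>0$, $R(0)=D(0)=0$, $I_0\delta_{\max}<S_0$. It is assumed that the policy $u$ keeps $S(k),I(k),R(k),D(k)$ nonnegative for all $k$ with probability one. The state transition function is $\Phi_I(k,k_0)=\prod_{i=k_0}^{k-1}(1+\delta(i)-d_I(i))$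 for integers $k\ge k_0\ge0$ (empty product $=1$). *)

From HB Require Import structures.
From mathcomp Require Import all_boot all_order all_algebra.
From mathcomp Require Import all_classical all_reals all_analysis.
Set Implicit Arguments. Unset Strict Implicit. Unset Printing Implicit Defensive.
Import Order.TTheory GRing.Theory Num.Theory.
Local Open Scope classical_set_scope.
Local Open Scope ring_scope.

Definition mutually_independent {d} {T : measurableType d} {R : realType}
  (P : probability T R) {I : eqType} (X : I -> T -> R) : Prop :=
  forall (J : seq I) (B : I -> set R), uniq J ->
    (forall i, measurable (B i)) ->
    P (\big[setI/setT]_(i <- J) (X i @^-1` B i)) =
    (\prod_(i <- J) P (X i @^-1` B i))%E.

Definition identically_distributed {d} {T : measurableType d} {R : realType}
  (P : probability T R) (X : nat -> T -> R) : Prop :=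
  forall k (B : set R), measurable B -> P (X k @^-1` B) = P (X 0%N @^-1` B).

Definition noise_family {T : Type} {R : Type} (delta dI v : nat -> T -> R)
  (p : 'I_3 * nat) : T -> R :=
  if val p.1 == 0%N then delta p.2 else if val p.1 == 1%N then dI p.2 else v p.2.

Fixpoint Ist {T : Type} {R : realType} (I0 : R) (delta dI v u : nat -> T -> R)
  (k : nat) (w : T) : R :=
  match k with
  | 0 => I0
  | k'.+1 => (1 + delta k' w) * Ist I0 delta dI v u k' w - v k' w * u k' w
             - dI k' w * Ist I0 delta dI v u k' w
  end.

Fixpoint Sst {T : Type} {R : realType} (S0 I0 : R) (delta dI v u : nat -> T -> R)
  (k : nat) (w : T) : R :=
  match k with
  | 0 => S0
  | k'.+1 => Sst S0 I0 delta dI v u k' w - delta k' w * Ist I0 delta dI v u k' w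
  end.

Fixpoint Rst {T : Type} {R : realType} (v u : nat -> T -> R)
  (k : nat) (w : T) : R :=
  match k with
  | 0 => 0
  | k'.+1 => Rst v u k' w + v k' w * u k' w
  end.

Fixpoint Dst {T : Type} {R : realType} (I0 : R) (delta dI v u : nat -> T -> R)
  (k : nat) (w : T) : R :=
  match k with
  | 0 => 0
  | k'.+1 => Dst I0 delta dI v u k' w + dI k' w * Ist I0 delta dI v u k' w
  end.

Definition PhiI {T : Type} {R : realType} (delta dI : nat -> T -> R)
  (k k0 : nat) (w : T) : R :=
  \prod_(k0 <= i < k) (1 + delta i w - dI i w).

Definition info_upto {T : Type} {R : realType} (Sx Ix Rx Dx : nat -> T -> R)
  (k : nat) : set (set T) :=
  <<s [set A | exists j (B : set R), (j <= k)%N /\ measurable B /\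
        (A = Sx j @^-1` B \/ A = Ix j @^-1` B \/ A = Rx j @^-1` B
         \/ A = Dx j @^-1` B)] >>.

Definition causal {T : Type} {R : realType} (S0 I0 : R)
  (delta dI v u : nat -> T -> R) : Prop :=
  forall k (B : set R), measurable B ->
    info_upto (Sst S0 I0 delta dI v u) (Ist I0 delta dI v u) (Rst v u)
      (Dst I0 delta dI v u) k (u k @^-1` B).

From HB Require Import structures.
From mathcomp Require Import all_boot all_order all_algebra.
From mathcomp Require Import all_classical all_reals all_analysis.
From mathcomp Require Import measurable_realfun.
From mathcomp Require Import ring lra zify.
Set Implicit Arguments. Unset Strict Implicit. Unset Printing Implicit Defensive.
Import Order.TTheory GRing.Theory Num.Theory.
Local Open Scope classical_set_scope.
Local Open Scope ring_scope.

(* The pathwise formula is variation of constants for the linear recursion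
   I(k+1) = (1 + delta(k) - d_I(k)) I(k) - v(k) u(k).
   For the expectation bound, the states of day k, hence u(k) by causality,
   are measurable with respect to the noise of the days before k, which is
   independent of delta(k) and d_I(k) (a pi-lambda argument over the finite
   cylinders of the independent noise family).  Hence
   E[delta(k) I(k)] = delta_bar E[I(k)], likewise for d_I, and v >= v_min gives
   E[v(k) u(k)] >= v_min E[u(k)].  Taking expectations of the recursion yields
   E[I(k+1)] <= (1 + delta_bar - dI_bar) E[I(k)] - v_min E[u(k)], where every
   term is finite because it is nonnegative and bounded by
   (1 + delta_bar) E[I(k)]; unrolling this affine inequality gives the bound. *)

Lemma ge0_le_fin_num (R : realDomainType) (x y : \bar R) :
  (0 <= x)%E -> (x <= y)%E -> y \is a fin_num -> x \is a fin_num.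
Proof.
by move=> x0 xy /fin_numPlt/andP[_ yoo]; rewrite ge0_fin_numE // (le_lt_trans xy).
Qed.

Section ge0_expectation.
Local Open Scope ereal_scope.
Context d (T : measurableType d) (R : realType) (P : probability T R).

Lemma ge0_expectationD (f g : T -> R) :
  measurable_fun setT f -> measurable_fun setT g ->
  (forall w, 0 <= f w)%R -> (forall w, 0 <= g w)%R ->
  'E_P[(f \+ g)%R] = 'E_P[f] + 'E_P[g].
Proof.
move=> mf mg f0 g0; rewrite unlock -ge0_integralD //.
- by move=> w _; rewrite lee_fin.
- exact/measurable_EFinP.
- by move=> w _; rewrite lee_fin.
- exact/measurable_EFinP.
Qed.

Lemma ge0_expectationZl (k : R) (f : T -> R) : measurable_fun setT f ->
  (0 <= k)%R -> (forall w, 0 <= f w)%R -> 'E_P[(cst k \* f)%R] = k%:E * 'E_P[f].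
Proof.
move=> mf k0 f0; rewrite unlock -ge0_integralZl //.
- exact/measurable_EFinP.
- by move=> w _; rewrite lee_fin.
Qed.

Lemma ae_eq_expectation (f g : T -> R) :
  measurable_fun setT f -> measurable_fun setT g ->
  {ae P, forall w, f w = g w} -> 'E_P[f] = 'E_P[g].
Proof.
move=> mf mg fg; rewrite unlock; apply: ae_eq_integral => //.
- exact/measurable_EFinP.
- exact/measurable_EFinP.
by apply: filterS fg => w + _ => ->.
Qed.

End ge0_expectation.

Section independent_product.
Local Open Scope ereal_scope.
Context d (T : measurableType d) (R : realType) (P : probability T R).
Variables X Y : T -> R.
Hypotheses (mX : measurable_fun setT X) (mY : measurable_fun setT Y).
Hypothesis XY_indep : forall A B : set R, measurable A -> measurable B ->
  P (X @^-1` A `&` Y @^-1` B) = P (X @^-1` A) * P (Y @^-1` B).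

Let mXY : measurable_fun setT (fun w => (X w, Y w)).
Proof. exact: measurable_fun_pair. Qed.
Let XRV : {RV P >-> R} := HB.pack X (isMeasurableFun.Build _ _ _ _ _ mX).
Let YRV : {RV P >-> R} := HB.pack Y (isMeasurableFun.Build _ _ _ _ _ mY).
Let XYRV : {RV P >-> (R * R)%type} :=
  HB.pack (fun w => (X w, Y w)) (isMeasurableFun.Build _ _ _ _ _ mXY).

Let joint_distribution A : measurable A ->
  (distribution P XRV \x distribution P YRV) A = distribution P XYRV A.
Proof. by apply: product_measure_unique => B C mB mC; rewrite /= -XY_indep. Qed.

Lemma expectation_normM_indep :
  'E_P[fun w => `|X w * Y w|%R] = 'E_P[fun w => `|X w|%R] * 'E_P[fun w => `|Y w|%R].
Proof.
pose f (z : R * R) := (`|z.1| * `|z.2|)%:E.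
have mf : measurable_fun setT f.
  apply/measurable_EFinP/measurable_funM.
    by apply: measurableT_comp; [exact: normr_measurable|exact: measurable_fst].
  by apply: measurableT_comp; [exact: normr_measurable|exact: measurable_snd].
have f0 z : 0 <= f z by rewrite lee_fin mulr_ge0.
rewrite unlock.
transitivity (\int[distribution P XYRV]_z f z).
  rewrite ge0_integral_distribution //; apply: eq_integral => w _.
  by rewrite /f /= normrM.
rewrite (eq_measure_integral (distribution P XRV \x distribution P YRV)); last first.
  by move=> A mA _; exact/esym/joint_distribution.
rewrite fubini_tonelli1 //.
have mnorm : measurable_fun setT (fun x : R => `|x|%:E).
  by apply/measurable_EFinP; exact: normr_measurable.
transitivity (\int[distribution P XRV]_x
    (`|x|%:E * \int[distribution P YRV]_y `|y|%:E)).
  apply: eq_integral => x _; rewrite /fubini_F /f /=.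
  under eq_integral do rewrite EFinM.
  by rewrite ge0_integralZl // => y _; rewrite lee_fin.
rewrite ge0_integralZr //; last exact: integral_ge0.
by rewrite !ge0_integral_distribution.
Qed.

Lemma ge0_expectationM_indep : (forall w, 0 <= X w)%R -> (forall w, 0 <= Y w)%R ->
  'E_P[(X \* Y)%R] = 'E_P[X] * 'E_P[Y].
Proof.
move=> X0 Y0; have := expectation_normM_indep.
have normE (Z : T -> R) : (forall w, 0 <= Z w)%R -> (fun w => `|Z w|%R) = Z.
  by move=> Z0; apply: funext => w; rewrite ger0_norm.
by rewrite !normE // => w; rewrite mulr_ge0.
Qed.

End independent_product.

Lemma dynkin_indep_event d (T : measurableType d) (R : realType)
    (P : probability T R) (E : set T) : measurable E ->
  dynkin [set A | measurable A /\ P (E `&` A) = (P E * P A)%E].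
Proof.
move=> mE; have PE_fin : P E \is a fin_num by rewrite fin_num_measure.
split.
- by split => //; rewrite setIT probability_setT mule1.
- move=> A [mA PEA]; split; first exact: measurableC.
  rewrite -setDE measureD //; last by rewrite -ge0_fin_numE.
  (* [rewrite PEA] fails: the two occurrences of [P] unfold to different
     structure projections. *)
  transitivity (P E - P E * P A)%E; first by congr (_ - _)%E; exact: PEA.
  by rewrite probability_setC // muleBr ?mule1.
- move=> F tF FE; have mF k := (FE k).1.
  split; first exact: bigcupT_measurable.
  rewrite setI_bigcupr !measure_bigcup //; last 2 first.
  + by move=> k _; exact: measurableI.
  + apply/trivIsetP => i j _ _ ij; rewrite setIACA setIid.
    by move/trivIsetP: tF => /(_ i j Logic.I Logic.I ij) ->; rewrite setI0.
  transitivity (\sum_(k <oo | k \in [set: nat]) ((fine (P E))%:E * P (F k)))%E.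
    by apply: eq_eseriesr => k _; rewrite fineK //; exact: (FE k).2.
  by rewrite nneseriesZl // fineK.
Qed.

Section cylinders.
Context d (T : measurableType d) (R : realType) (I : choiceType).
Variable X : I -> T -> R.
Implicit Types S : pred I.

Definition cylinders (S : pred I) : set (set T) :=
  [set A | exists J (B : I -> set R), [/\ uniq J, all S J,
    (forall i, measurable (B i)) & A = \big[setI/setT]_(i <- J) X i @^-1` B i]].

Definition measurable_by (S : pred I) (f : T -> R) :=
  measurable_fun (T := g_sigma_algebraType (cylinders S)) setT f.

Lemma cylinders_setI_closed S : setI_closed (cylinders S).
Proof.
move=> _ _ [J1 [B1 [uJ1 SJ1 mB1 ->]]] [J2 [B2 [uJ2 SJ2 mB2 ->]]].
pose B i := (if i \in J1 then B1 i else setT) `&` (if i \in J2 then B2 i else setT).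
exists (J1 ++ [seq j <- J2 | j \notin J1]), B; split.
- rewrite cat_uniq uJ1 filter_uniq // andbT.
  by apply/hasPn => j; rewrite mem_filter => /andP[].
- rewrite all_cat SJ1 all_filter; apply/allP => j jJ2 /=.
  by rewrite (allP SJ2 j jJ2) implybT.
- by move=> i; apply: measurableI; case: ifP.
rewrite -!bigcap_seq; apply/seteqP; split => w /=.
- by move=> [F1 F2] i _; split; case: ifP => iJ //; [exact: F1|exact: F2].
- move=> F; split=> i iJ.
    by have := F i; rewrite /= mem_cat iJ /B => /(_ isT) [+ _]; rewrite iJ.
  have := F i; rewrite /= mem_cat mem_filter iJ andbT orbN /B => /(_ isT) [_].
  by rewrite iJ.
Qed.

Lemma cylinders_subset S S' : {subset S <= S'} -> cylinders S `<=` cylinders S'.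
Proof.
by move=> SS' A [J [B [uJ SJ mB ->]]]; exists J, B; split => //; exact: sub_all SJ.
Qed.

Lemma preimage_cylinders S i B : S i -> measurable B -> cylinders S (X i @^-1` B).
Proof.
by move=> Si mB; exists [:: i], (fun=> B); split => //=; rewrite ?Si ?big_seq1.
Qed.

Lemma measurable_by_subset S S' f :
  {subset S <= S'} -> measurable_by S f -> measurable_by S' f.
Proof.
move=> SS' mf _ B mB; apply: smallest_sub (mf measurableT B mB).
  exact: smallest_sigma_algebra.
exact: subset_trans (cylinders_subset SS') (@sub_sigma_algebra _ _ _).
Qed.

Lemma measurable_by_generator S i : S i -> measurable_by S (X i).
Proof.
by move=> Si _ B mB; rewrite setTI; apply: sub_sigma_algebra; exact: preimage_cylinders.
Qed.

Hypothesis mX : forall i, measurable_fun setT (X i).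

Lemma cylinders_measurable S : cylinders S `<=` measurable.
Proof.
move=> _ [J [B [_ _ mB ->]]]; apply: bigsetI_measurable => i _.
by rewrite -(setTI (X i @^-1` B i)); exact: mX.
Qed.

Lemma measurable_by_measurable S f : measurable_by S f -> measurable_fun setT f.
Proof.
move=> mf _ B mB; apply: smallest_sub (mf measurableT B mB).
  exact: sigma_algebra_measurable.
exact: cylinders_measurable.
Qed.

Variable P : probability T R.
Hypothesis X_indep : mutually_independent P X.

Lemma indep_sigma_cylinders S i B A : ~~ S i -> measurable B ->
  <<s cylinders S >> A -> P (X i @^-1` B `&` A) = (P (X i @^-1` B) * P A)%E.
Proof.
move=> Si mB SA; have mXB : measurable (X i @^-1` B).
  by rewrite -(setTI (X i @^-1` B)); exact: mX.
pose L := [set A | measurable A /\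
  P (X i @^-1` B `&` A) = (P (X i @^-1` B) * P A)%E].
suff [] : L A by [].
apply: (lambda_system_subset (@cylinders_setI_closed S) _ _ _ SA) => //.
  exact/dynkin_lambda_system/dynkin_indep_event.
move=> A' cA'; split; first exact: cylinders_measurable cA'.
case: cA' => J [B' [uJ SJ mB' ->]].
have iJ : i \notin J by apply: contra Si => /(allP SJ).
pose B'' j := if j == i then B else B' j.
have := X_indep (J := i :: J) (B := B''); rewrite /= iJ uJ !big_cons /B'' eqxx.
rewrite (eq_big_seq (fun j => X j @^-1` B' j)); last first.
  by move=> j jJ; case: eqP => // ji; rewrite -ji jJ in iJ.
rewrite (eq_big_seq (fun j => P (X j @^-1` B' j))); last first.
  by move=> j jJ; case: eqP => // ji; rewrite -ji jJ in iJ.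
rewrite -(X_indep uJ mB'); apply => //.
by move=> j; rewrite /B''; case: ifP.
Qed.

Lemma ge0_expectationM_measurable_by S i f : ~~ S i -> measurable_by S f ->
  (forall w, 0 <= X i w) -> (forall w, 0 <= f w) ->
  ('E_P[(X i \* f)%R] = 'E_P[X i] * 'E_P[f])%E.
Proof.
move=> Si mf X0 f0.
apply: ge0_expectationM_indep => //; first exact: measurable_by_measurable mf.
move=> A B mA mB; apply: (@indep_sigma_cylinders S) => //.
by have := mf measurableT B mB; rewrite setTI.
Qed.
End cylinders.

Section state_transition.
Context (T : Type) (R : realType) (delta dI : nat -> T -> R).

Lemma PhiI_recr k i w : (i <= k)%N ->
  PhiI delta dI k.+1 i w = PhiI delta dI k i w * (1 + delta k w - dI k w).
Proof. by move=> ik; rewrite /PhiI big_nat_recr. Qed.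

Lemma PhiIxx k w : PhiI delta dI k k w = 1.
Proof. by rewrite /PhiI big_geq. Qed.

Lemma Ist_PhiI (I0 : R) (v u : nat -> T -> R) k w :
  Ist I0 delta dI v u k w = PhiI delta dI k 0 w * I0
    - \sum_(0 <= i < k) PhiI delta dI k i.+1 w * v i w * u i w.
Proof.
elim: k => [|k IH]; first by rewrite PhiIxx big_geq // mul1r subr0.
rewrite /= IH big_nat_recr //= PhiIxx PhiI_recr //.
have -> : \sum_(0 <= i < k) PhiI delta dI k.+1 i.+1 w * v i w * u i w =
    (\sum_(0 <= i < k) PhiI delta dI k i.+1 w * v i w * u i w)
    * (1 + delta k w - dI k w).
  by rewrite mulr_suml; apply: eq_big_nat => i /andP[_ ik]; rewrite PhiI_recr //; ring.
ring.
Qed.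

End state_transition.

Lemma le_linear_recurrence (R : numDomainType) (c : R) (a e : nat -> R) :
  0 <= c -> (forall n, a n.+1 <= c * a n - e n) ->
  forall n, a n <= c ^+ n * a 0%N - \sum_(0 <= i < n) c ^+ (n - i - 1) * e i.
Proof.
move=> c0 rec; elim=> [|n IH]; first by rewrite big_geq // subr0 mul1r.
have sum_recr : \sum_(0 <= i < n.+1) c ^+ (n.+1 - i - 1) * e i =
    c * \sum_(0 <= i < n) c ^+ (n - i - 1) * e i + e n.
  rewrite big_nat_recr //= subSnn subnn expr0 mul1r mulr_sumr; congr (_ + _).
  apply: eq_big_nat => i /andP[_ ilt].
  by rewrite mulrA -exprS; congr (_ ^+ _ * _); lia.
have -> : c ^+ n.+1 * a 0%N - \sum_(0 <= i < n.+1) c ^+ (n.+1 - i - 1) * e i =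
    c * (c ^+ n * a 0%N - \sum_(0 <= i < n) c ^+ (n - i - 1) * e i) - e n.
  by rewrite sum_recr exprS; ring.
by apply: (le_trans (rec n)); rewrite lerD2r ler_wpM2l.
Qed.

Definition days_before (n : nat) : pred ('I_3 * nat) := fun p => (p.2 < n)%N.

Lemma days_before_subset m n : (m <= n)%N -> {subset days_before m <= days_before n}.
Proof. by move=> mn p; rewrite !unfold_in => /leq_trans; apply. Qed.

Section adapted_states.
Context d (T : measurableType d) (R : realType).
Variables (delta dI v u : nat -> T -> R) (S0 I0 : R).

Local Notation X := (noise_family delta dI v).
Local Notation adapted n := (measurable_by X (days_before n)).
Local Notation Sx := (Sst S0 I0 delta dI v u).
Local Notation Ix := (Ist I0 delta dI v u).
Local Notation Rx := (Rst v u).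
Local Notation Dx := (Dst I0 delta dI v u).

Lemma noise_family_measurable p :
  (forall k, measurable_fun setT (delta k)) -> (forall k, measurable_fun setT (dI k)) ->
  (forall k, measurable_fun setT (v k)) -> measurable_fun setT (X p).
Proof. by move=> md mdI mv; rewrite /noise_family; case: ifP => _; [|case: ifP]. Qed.

Lemma noise_adapted n :
  [/\ adapted n.+1 (delta n), adapted n.+1 (dI n) & adapted n.+1 (v n)].
Proof.
have before_n (o : 'I_3) : days_before n.+1 (o, n) by exact: ltnSn.
by split; [exact: (measurable_by_generator (before_n (@Ordinal 3 0 isT)))
          |exact: (measurable_by_generator (before_n (@Ordinal 3 1 isT)))
          |exact: (measurable_by_generator (before_n (@Ordinal 3 2 isT)))].
Qed.

Let states_adapted n :=
  [/\ adapted n (Sx n), adapted n (Ix n), adapted n (Rx n) & adapted n (Dx n)].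

Hypothesis u_causal : causal S0 I0 delta dI v u.

Let u_adapted_of_states n :
  (forall j, (j <= n)%N -> states_adapted j) -> adapted n (u n).
Proof.
move=> states _ B mB; rewrite setTI.
apply: smallest_sub (u_causal mB); first exact: smallest_sigma_algebra.
move=> A [j [B' [jn [mB' eqA]]]].
have past f : adapted j f -> <<s cylinders X (days_before n) >> (f @^-1` B').
  move=> /(measurable_by_subset (days_before_subset jn)) mf.
  by have := mf measurableT B' mB'; rewrite setTI.
have [hS hI hR hD] := states j jn.
by case: eqA => [->|[->|[->|->]]]; exact: past.
Qed.

Let states_adapted_succ n : states_adapted n -> adapted n (u n) -> states_adapted n.+1.
Proof.
have [md mdI mv] := noise_adapted n.
move=> [hS hI hR hD] hu.
have past f : adapted n f -> adapted n.+1 f.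
  by apply: measurable_by_subset; exact: days_before_subset (leqnSn n).
split=> /=.
- by apply: measurable_funB; [exact: past|apply: measurable_funM => //; exact: past].
- apply: measurable_funB; last by apply: measurable_funM => //; exact: past.
  apply: measurable_funB; last by apply: measurable_funM => //; exact: past.
  by apply: measurable_funM; [exact: measurable_funD|exact: past].
- by apply: measurable_funD; [exact: past|apply: measurable_funM => //; exact: past].
- by apply: measurable_funD; [exact: past|apply: measurable_funM => //; exact: past].
Qed.

Let all_states_adapted n : states_adapted n.
Proof.
elim/ltn_ind: n => -[_|n IH]; first by split; exact: measurable_cst.
apply: states_adapted_succ; first exact: IH.
by apply: u_adapted_of_states => j jn; apply: IH; rewrite ltnS.
Qed.

Lemma Ist_adapted n : adapted n (Ix n).
Proof. by have [] := all_states_adapted n. Qed.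

Lemma u_adapted n : adapted n (u n).
Proof. by apply: u_adapted_of_states => j _; exact: all_states_adapted. Qed.

End adapted_states.

Section expected_infected.
Local Open Scope ereal_scope.
Context d (T : measurableType d) (R : realType) (P : probability T R).
Variables (delta dI v u : nat -> T -> R) (v_min delta_bar dI_bar S0 I0 : R).
Hypotheses (mdelta : forall k, measurable_fun setT (delta k))
  (mdI : forall k, measurable_fun setT (dI k))
  (mv : forall k, measurable_fun setT (v k)).
Hypothesis noise_indep : mutually_independent P (noise_family delta dI v).
Hypotheses (delta_ge0 : forall k w, (0 <= delta k w)%R)
  (dI_ge0 : forall k w, (0 <= dI k w)%R) (dI_le1 : forall k w, (dI k w <= 1)%R)
  (v_min_gt0 : (0 < v_min)%R) (v_ge : forall k w, (v_min <= v k w)%R)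
  (u_ge0 : forall k w, (0 <= u k w)%R) (I0_ge0 : (0 <= I0)%R).
Hypotheses (Edelta : forall k, 'E_P[delta k] = delta_bar%:E)
  (EdI : forall k, 'E_P[dI k] = dI_bar%:E).
Hypothesis u_causal : causal S0 I0 delta dI v u.
Hypothesis Ist_ge0 : forall k, {ae P, forall w, (0 <= Ist I0 delta dI v u k w)%R}.

Local Notation X := (noise_family delta dI v).
Local Notation Ix := (Ist I0 delta dI v u).
Local Notation growth := (1 + delta_bar - dI_bar)%R.

Let mX p : measurable_fun setT (X p).
Proof. exact: noise_family_measurable p mdelta mdI mv. Qed.

Let v_ge0 k w : (0 <= v k w)%R. Proof. exact: le_trans (ltW v_min_gt0) (v_ge k w). Qed.

Let mu k : measurable_fun setT (u k).
Proof. exact: (measurable_by_measurable mX (u_adapted u_causal (n := k))). Qed.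

(* [Ix] is nonnegative only almost surely; replacing it by its positive part
   keeps every expectation an integral of a nonnegative function, so that no
   integrability assumption is needed. *)
Let Ipos n w := Num.max (Ix n w) 0%R.

Let Ipos_ge0 n w : (0 <= Ipos n w)%R. Proof. by rewrite le_max lexx orbT. Qed.

Let Ipos_adapted n : measurable_by X (days_before n) (Ipos n).
Proof.
by apply: measurable_maxr; [exact: (Ist_adapted u_causal)|exact: measurable_cst].
Qed.

Let mIpos n : measurable_fun setT (Ipos n).
Proof. exact: (measurable_by_measurable mX (Ipos_adapted (n := n))). Qed.

Let expectation_Ipos n : 'E_P[Ix n] = 'E_P[Ipos n].
Proof.
apply: ae_eq_expectation => //.
  exact: (measurable_by_measurable mX (Ist_adapted u_causal (n := n))).
by apply: filterS (Ist_ge0 n) => w w0; rewrite /Ipos (max_idPl w0).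
Qed.

Let expectation_deltaM n : 'E_P[(delta n \* Ipos n)%R] = delta_bar%:E * 'E_P[Ipos n].
Proof.
rewrite -(Edelta n); apply: (ge0_expectationM_measurable_by mX noise_indep
  (S := days_before n) (i := (@Ordinal 3 0 isT, n))) => //.
- by rewrite /days_before /= ltnn.
- by move=> w; exact: delta_ge0.
Qed.

Let expectation_dIM n : 'E_P[(dI n \* Ipos n)%R] = dI_bar%:E * 'E_P[Ipos n].
Proof.
rewrite -(EdI n); apply: (ge0_expectationM_measurable_by mX noise_indep
  (S := days_before n) (i := (@Ordinal 3 1 isT, n))) => //.
- by rewrite /days_before /= ltnn.
- by move=> w; exact: dI_ge0.
Qed.

Let expectation_vu_ge n : v_min%:E * 'E_P[u n] <= 'E_P[(v n \* u n)%R].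
Proof.
rewrite -ge0_expectationZl //; last exact: ltW.
apply: expectation_le => //.
- by apply: measurable_funM => //; exact: measurable_cst.
- by apply: measurable_funM.
- by move=> w; rewrite mulr_ge0 // ltW.
- by move=> w; rewrite mulr_ge0.
by apply: aeW => w; rewrite ler_wpM2r.
Qed.

Let expectation_step n :
  'E_P[Ipos n.+1] + v_min%:E * 'E_P[u n] + dI_bar%:E * 'E_P[Ipos n] <=
  'E_P[Ipos n] + delta_bar%:E * 'E_P[Ipos n].
Proof.
have mvu : measurable_fun setT (v n \* u n)%R by exact: measurable_funM.
have mdI_Ipos : measurable_fun setT (dI n \* Ipos n)%R by exact: measurable_funM.
have mdelta_Ipos : measurable_fun setT (delta n \* Ipos n)%R by exact: measurable_funM.
have balance : {ae P, forall w, (Ipos n.+1 \+ v n \* u n \+ dI n \* Ipos n)%R w =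
    (Ipos n \+ delta n \* Ipos n)%R w}.
  apply: filterS2 (Ist_ge0 n) (Ist_ge0 n.+1) => w I_ge0 I1_ge0.
  by rewrite /= /Ipos (max_idPl I_ge0) (max_idPl I1_ge0) /=; ring.
have vu_ge0 w : (0 <= (v n \* u n) w)%R by rewrite mulr_ge0.
have dI_Ipos_ge0 w : (0 <= (dI n \* Ipos n) w)%R by rewrite mulr_ge0.
have delta_Ipos_ge0 w : (0 <= (delta n \* Ipos n) w)%R by rewrite mulr_ge0.
have := ae_eq_expectation (measurable_funD (measurable_funD (mIpos n.+1) mvu) mdI_Ipos)
  (measurable_funD (mIpos n) mdelta_Ipos) balance.
rewrite !ge0_expectationD //; last 2 first.
- exact: measurable_funD.
- by move=> w; rewrite addr_ge0.
rewrite expectation_dIM expectation_deltaM => <-.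
by rewrite leeD2r // leeD2l // expectation_vu_ge.
Qed.

Let delta_bar_ge0 : (0 <= delta_bar)%R.
Proof. by rewrite -lee_fin -(Edelta 0) expectation_ge0. Qed.

Let dI_bar_ge0 : (0 <= dI_bar)%R.
Proof. by rewrite -lee_fin -(EdI 0) expectation_ge0. Qed.

Let dI_bar_le1 : (dI_bar <= 1)%R.
Proof.
rewrite -lee_fin -(EdI 0) -(expectation_cst P 1%R).
apply: expectation_le; [exact: mdI|exact: measurable_cst|exact: dI_ge0| |].
  by move=> w; exact: ler01.
by apply: aeW => w; exact: dI_le1.
Qed.

Let growth_ge0 : (0 <= growth)%R.
Proof. by rewrite subr_ge0 (le_trans dI_bar_le1) // lerDl. Qed.

Let expectation_Ipos0 : 'E_P[Ipos 0] = I0%:E.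
Proof.
rewrite -(expectation_cst P I0); congr expectation.
by apply: funext => w; rewrite /Ipos /= (max_idPl I0_ge0).
Qed.

Let expectation_step_fin_num n : 'E_P[Ipos n] \is a fin_num ->
  'E_P[Ipos n.+1] \is a fin_num /\ 'E_P[u n] \is a fin_num.
Proof.
move=> In_fin.
have : 'E_P[Ipos n.+1] + v_min%:E * 'E_P[u n] + dI_bar%:E * 'E_P[Ipos n] \is a fin_num.
  apply: ge0_le_fin_num (expectation_step n) _.
    by rewrite !adde_ge0 ?mule_ge0 ?expectation_ge0 // lee_fin ltW.
  by rewrite fin_numD fin_numM ?In_fin.
rewrite !fin_numD => /andP[/andP[-> vu_fin] _]; split => //.
move: vu_fin; have [->|] := eqVneq 'E_P[u n] +oo; first by rewrite gt0_muley ?lte_fin.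
by move=> u_fin _; rewrite ge0_fin_numE ?expectation_ge0 // ltey.
Qed.

Let expectation_Ipos_fin_num n : 'E_P[Ipos n] \is a fin_num.
Proof.
elim: n => [|n IH]; first by rewrite expectation_Ipos0.
exact: (expectation_step_fin_num IH).1.
Qed.

Let expectation_u_fin_num n : 'E_P[u n] \is a fin_num.
Proof. exact: (expectation_step_fin_num (expectation_Ipos_fin_num n)).2. Qed.

Let fine_expectation_step n : (fine 'E_P[Ipos n.+1] <=
  growth * fine 'E_P[Ipos n] - v_min * fine 'E_P[u n])%R.
Proof.
have := expectation_step n.
move: (expectation_Ipos_fin_num n) (expectation_Ipos_fin_num n.+1).
move: (expectation_u_fin_num n) => /fineK <- /fineK <- /fineK <-.
rewrite -!EFinM -!EFinD lee_fin; lra.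
Qed.

Lemma expectation_Ist_le k : 'E_P[Ix k] <=
  (growth ^+ k * I0)%:E
  - v_min%:E * \sum_(0 <= i < k) (growth ^+ (k - i - 1))%:E * 'E_P[u i].
Proof.
have := le_linear_recurrence (a := fun n => fine 'E_P[Ipos n])
  (e := fun n => v_min * fine 'E_P[u n])%R growth_ge0 fine_expectation_step k.
rewrite expectation_Ipos0 /=.
under eq_bigr do rewrite mulrCA.
rewrite -mulr_sumr => bound.
rewrite expectation_Ipos -(fineK (expectation_Ipos_fin_num k)).
under eq_bigr => i _ do rewrite -(fineK (expectation_u_fin_num i)) -EFinM.
by rewrite sumEFin -EFinM -EFinB lee_fin.
Qed.
End expected_infected.

Theorem lemma2 (d : measure_display) (T : measurableType d) (R : realType)
  (P : probability T R) (delta dI v u : nat -> T -> R)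
  (delta_max d_max v_min v_max delta_bar dI_bar S0 I0 : R) :
  (forall k, measurable_fun setT (delta k)) ->
  (forall k, measurable_fun setT (dI k)) ->
  (forall k, measurable_fun setT (v k)) ->
  mutually_independent P (noise_family delta dI v) ->
  identically_distributed P delta ->
  identically_distributed P dI ->
  identically_distributed P v ->
  (forall k w, 0 <= delta k w <= delta_max) ->
  (forall k w, 0 <= dI k w <= d_max) -> d_max < 1 ->
  0 < v_min -> v_max <= 1 ->
  (forall k w, v_min <= v k w <= v_max) ->
  (forall k, ('E_P[delta k] = delta_bar%:E)%E) ->
  (forall k, ('E_P[dI k] = dI_bar%:E)%E) ->
  0 < I0 -> I0 * delta_max < S0 ->
  (forall k w, 0 <= u k w) ->
  causal S0 I0 delta dI v u ->
  (forall k, {ae P, forall w,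
     0 <= Sst S0 I0 delta dI v u k w /\ 0 <= Ist I0 delta dI v u k w /\
     0 <= Rst v u k w /\ 0 <= Dst I0 delta dI v u k w}) ->
  forall k, (1 <= k)%N ->
    (forall w, Ist I0 delta dI v u k w =
       PhiI delta dI k 0 w * I0
       - \sum_(0 <= i < k) PhiI delta dI k i.+1 w * v i w * u i w) /\
    ('E_P[Ist I0 delta dI v u k] <=
       ((1 + delta_bar - dI_bar) ^+ k * I0)%:E
       - v_min%:E * \sum_(0 <= i < k)
           ((1 + delta_bar - dI_bar) ^+ (k - i - 1))%:E * 'E_P[u i])%E.
Proof.
move=> mdelta mdI mv noise_indep _ _ _ delta_bnd dI_bnd d_max_lt1 v_min_gt0 _ v_bnd
  Edelta EdI I0_gt0 _ u_ge0 u_causal states_ge0 k _.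
split=> [w|]; first exact: Ist_PhiI.
apply: (expectation_Ist_le mdelta mdI mv noise_indep _ _ _ v_min_gt0 _ u_ge0 _
  Edelta EdI u_causal).
- by move=> j w; case/andP: (delta_bnd j w).
- by move=> j w; case/andP: (dI_bnd j w).
- by move=> j w; case/andP: (dI_bnd j w) => _ /le_trans; apply; exact: ltW.
- by move=> j w; case/andP: (v_bnd j w).
- exact: ltW.
- by move=> j; apply: filterS (states_ge0 j) => w [_ []].
Qed.
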